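(* Let $p$ be a prime, $q=p^m$, $\pi\in\mathbb C_p$ a root of $X^{p-1}+p$, and write $\exp(\pi X-\pi X^q)=\sum_{n\ge0}\lambda^{(m)}_nX^n$. Then in $\mathbb Z_p[\zeta_p]$: if $0\le n\le q-1$, $\lambda^{(m)}_n\equiv\frac{\pi^{s_p(n)}}{n!!}\mod\pi^{s_p(n)+p-1}$; if $n\ge q$, $\lambda^{(m)}_n\equiv0\mod\pi^{s_p(n)+p-1}$.
   Context: For $n=n_0+n_1p+\dots+n_tp^t$ with $0\le n_i\le p-1$, $s_p(n)=n_0+\dots+n_t$ and $n!!=n_0!\,n_1!\cdots n_t!$. Note $\mathbb Q_p(\pi)=\mathbb Q_p(\zeta_p)$ and $\pi$ generates the maximal ideal of $\mathbb Z_p[\zeta_p]$. *)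

From HB Require Import structures.
From mathcomp Require Import all_boot all_order all_algebra.
Set Implicit Arguments. Unset Strict Implicit. Unset Printing Implicit Defensive.
Import Order.TTheory GRing.Theory Num.Theory.
Local Open Scope ring_scope.

(* Base-p digits: n = \sum_i digit p n i * p^i (digits beyond index n vanish). *)
Definition digit (p n i : nat) : nat := (n %/ p ^ i) %% p.

Definition sp (p n : nat) : nat := (\sum_(i < n.+1) digit p n i)%N.

Definition dfact (p n : nat) : nat := (\prod_(i < n.+1) (digit p n i)`!)%N.

Definition p_integral (p : nat) (c : rat) : bool := ~~ (p %| `|denq c|)%N.

(* Elements of Q(pi) = Q[X]/(X^(p-1)+p) are represented by polynomials in
   pi (the variable 'X), pi being a root of X^(p-1)+p.
   pi_cong p k A B  <->  A(pi) = B(pi) mod pi^k in Z_p[pi] = Z_p[zeta_p],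
   i.e. A(pi) - B(pi) = pi^k * W(pi) with W having p-integral coefficients. *)
Definition pi_cong (p k : nat) (A B : {poly rat}) : Prop :=
  exists W : {poly rat}, (forall i, p_integral p W`_i) /\
    ('X^(p.-1) + (p%:R)%:P) %| (A - B - 'X^k * W).

(* The series exp(pi X - pi X^q), q = p^m, as a polynomial in X whose
   coefficients are polynomials in pi (inner variable).  Its n-th coefficient
   lambda^(m)_n is the coefficient of X^n in \sum_(k<=n) f^k / k!, where
   f = pi X - pi X^q (terms with k > n do not contribute since f(0) = 0). *)
Definition expf (p m : nat) : {poly {poly rat}} :=
  ('X%:P) * 'X - ('X%:P) * 'X^(p ^ m).

Definition lambda (p m n : nat) : {poly rat} :=
  (\sum_(k < n.+1) (((k`!)%:R : rat)^-1)%:P%:P * (expf p m) ^+ k)`_n.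

(* lambda_n = sum_b (-1)^b pi^(n-qb)/(n-qb)! pi^b/b! is the coefficient of X^n in
   exp(pi X) exp(-pi X^q).  Legendre's formula a! = p^e w with (p-1) e + s_p(a) = a,
   Wilson's theorem w = (-1)^e a!! mod p, and pi^(p-1) = -p give
   pi^a/a! = pi^(s_p(a))/a!! mod pi^(s_p(a)+p-1).  For n < q only b = 0 contributes.
   For n = x + q N with x < q and N > 0, the digits of n - qb = x + q (N-b) let one
   replace pi^(n-qb)/(n-qb)! by pi^(s_p(x))/x!! pi^(N-b)/(N-b)! modulo
   pi^(s_p(n)+p-1), since s_p(N) <= s_p(N-b) + s_p(b); what remains is pi^(s_p(x))/x!!
   times the coefficient of X^N in exp(pi X) exp(-pi X) = 1, which is 0. *)

From HB Require Import structures.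
From mathcomp Require Import all_boot all_order all_algebra.
From mathcomp Require Import ring zify.
Set Implicit Arguments. Unset Strict Implicit. Unset Printing Implicit Defensive.
Import Order.TTheory GRing.Theory Num.Theory.
Local Open Scope ring_scope.

(* The localisation of Z at the integers coprime to p, i.e. Z_(p) for p prime;
   phrased with coprimality so that it is a subring for every p. *)
Definition Zlocal (p : nat) : {pred rat} := fun c => coprime p `|denq c|.

Lemma ZlocalP p c :
  reflect (exists2 d : nat, coprime p d & c * d%:R \is a Num.int) (c \in Zlocal p).
Proof.
apply: (iffP idP) => [cop | [d cop /intrP [z cdz]]].
  by exists `|denq c|%N => //; rewrite natr_absz gtr0_norm // -numqE intr_int.
have eq_int : numq c * d%:Z = z * denq c.
  by apply: (@intr_inj rat); rewrite !rmorphM /= numqE -cdz mulrAC.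
have : (`|denq c| %| `|numq c| * d)%N.
  by apply/dvdnP; exists `|z|%N; rewrite -abszM -eq_int abszM.
by rewrite Gauss_dvdr 1?coprime_sym ?coprime_num_den // => /coprime_dvdr; apply.
Qed.

Lemma Zlocal_subring_closed p : subring_closed (Zlocal p).
Proof.
split; first by apply/ZlocalP; exists 1%N; rewrite ?coprimen1 // mulr1 rpred1.
  move=> a b /ZlocalP [d1 c1 i1] /ZlocalP [d2 c2 i2]; apply/ZlocalP.
  exists (d1 * d2)%N; first by rewrite coprimeMr c1.
  rewrite natrM mulrBl mulrA [d1%:R * _]mulrC mulrA rpredB // rpredM //; exact: natr_int.
move=> a b /ZlocalP [d1 c1 i1] /ZlocalP [d2 c2 i2]; apply/ZlocalP.
exists (d1 * d2)%N; first by rewrite coprimeMr c1.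
by rewrite natrM mulrACA rpredM.
Qed.

HB.instance Definition _ (p : nat) :=
  GRing.isSubringClosed.Build rat (Zlocal p) (Zlocal_subring_closed p).

Lemma Zlocal_invn p d : coprime p d -> (d%:R)^-1 \in Zlocal p.
Proof.
have [->|d_gt0 cop] := posnP d; first by rewrite invr0 rpred0.
by apply/ZlocalP; exists d; rewrite // mulVf ?pnatr_eq0 -?lt0n // rpred1.
Qed.

Section Digits.
Variable p : nat.
Hypothesis p_gt1 : (1 < p)%N.

Lemma digit_eq0 n i : (n <= i)%N -> digit p n i = 0%N.
Proof.
move=> le_ni; rewrite /digit divn_small ?mod0n //.
exact: leq_ltn_trans le_ni (ltn_expl _ p_gt1).
Qed.

Variables (R : Type) (idx : R) (op : Monoid.com_law idx) (f : nat -> R).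
Hypothesis f0 : f 0%N = idx.

Let digit_big n := \big[op/idx]_(i < n.+1) f (digit p n i).

Lemma big_digits_trunc n K : (n <= K)%N ->
  \big[op/idx]_(i < K) f (digit p n i) = \big[op/idx]_(i < n) f (digit p n i).
Proof.
elim: K => [|K IHK]; first by rewrite leqn0 => /eqP ->.
rewrite leq_eqVlt => /orP [/eqP -> //|lt_nK].
by rewrite big_ord_recr /= digit_eq0 // f0 Monoid.mulm1 IHK.
Qed.

Lemma big_digits0 : digit_big 0 = idx.
Proof. by rewrite /digit_big big_ord1 /digit div0n mod0n f0. Qed.

Lemma big_digits_rec n : digit_big n = op (f (n %% p)) (digit_big (n %/ p)).
Proof.
rewrite /digit_big big_ord_recl /digit expn0 divn1; congr (op _ _).
rewrite (eq_bigr (fun i : 'I_n => f (digit p (n %/ p) i))); last first.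
  by move=> i _; rewrite /digit /= expnS divnMA.
by rewrite !big_digits_trunc // leq_div.
Qed.

Lemma big_digits_split m x y : (x < p ^ m)%N ->
  digit_big (x + p ^ m * y) = op (digit_big x) (digit_big y).
Proof.
have p_gt0 := ltnW p_gt1.
elim: m x y => [|m IHm] x y.
  by rewrite expn0 ltnS leqn0 => /eqP ->; rewrite big_digits0 mul1n add0n Monoid.mul1m.
move=> lt_x; rewrite big_digits_rec [digit_big x]big_digits_rec -Monoid.mulmA.
have -> : (x + p ^ m.+1 * y = (p ^ m * y) * p + x)%N by rewrite expnS; ring.
by rewrite modnMDl divnMDl // addnC IHm // ltn_divLR // -expnSr.
Qed.

End Digits.

Section DigitSums.
Variable p : nat.
Hypothesis p_gt1 : (1 < p)%N.

Lemma sp_rec n : sp p n = (n %% p + sp p (n %/ p))%N.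
Proof. exact: (big_digits_rec p_gt1 addn (f := id) erefl). Qed.

Lemma dfact_rec n : dfact p n = ((n %% p)`! * dfact p (n %/ p))%N.
Proof. exact: (big_digits_rec p_gt1 muln (f := factorial) erefl). Qed.

Lemma sp_split m x y : (x < p ^ m)%N -> sp p (x + p ^ m * y) = (sp p x + sp p y)%N.
Proof. exact: (big_digits_split p_gt1 addn (f := id) erefl). Qed.

Lemma dfact_split m x y : (x < p ^ m)%N ->
  dfact p (x + p ^ m * y) = (dfact p x * dfact p y)%N.
Proof. exact: (big_digits_split p_gt1 muln (f := factorial) erefl). Qed.

End DigitSums.

Section Legendre.
Variable p : nat.
Hypothesis pP : prime p.
Local Notation p_gt1 := (prime_gt1 pP).

Lemma natr_Fp_eq0 n : ((n%:R : 'F_p) == 0) = (p %| n)%N.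
Proof. by rewrite (dvdn_pcharf (pchar_Fp pP)). Qed.

Lemma coprime_natr_Fp n : coprime p n = ((n%:R : 'F_p) != 0).
Proof. by rewrite prime_coprime // natr_Fp_eq0. Qed.

Lemma fact_Fp_neq0 k : (k < p)%N -> (k`!)%:R != 0 :> 'F_p.
Proof.
elim: k => [|k IHk] lt_kp; first by rewrite natr_Fp_eq0 dvdn1 neq_ltn p_gt1 orbT.
rewrite factS natrM mulf_neq0 ?IHk 1?ltnW // natr_Fp_eq0.
by apply/negP => /(dvdn_leq (ltn0Sn k)); rewrite leqNgt lt_kp.
Qed.

Lemma dfact_Fp_neq0 n : (dfact p n)%:R != 0 :> 'F_p.
Proof.
rewrite natr_prod; apply/prodf_neq0 => i _.
by apply: fact_Fp_neq0; rewrite ltn_pmod ?prime_gt0.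
Qed.

Lemma Wilson_Fp : ((p.-1)`!)%:R = -1 :> 'F_p.
Proof.
have := Wilson p_gt1; rewrite pP -natr_Fp_eq0 -[((p.-1)`!).+1]addn1 natrD addr_eq0.
by move=> /esym /eqP.
Qed.

Lemma fact_addn_ffact a k : (a + k)`! = (a`! * (a + k) ^_ k)%N.
Proof. by rewrite -(ffact_fact (leq_addl a k)) addnK mulnC. Qed.

Lemma ffact_Fp a k : (p %| a)%N -> ((a + k) ^_ k)%:R = (k`!)%:R :> 'F_p.
Proof.
rewrite -natr_Fp_eq0 => /eqP a0; elim: k => [|k IHk] //.
by rewrite addnS ffactSS factS !natrM IHk -addnS natrD a0 add0r.
Qed.

(* The factors of (N p)! that are multiples of p contribute p^N N!, and each
   of the N blocks of p - 1 remaining factors is -1 mod p by Wilson. *)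
Lemma fact_mulp N :
  exists R, (N * p)`! = (p ^ N * N`! * R)%N /\ (R%:R : 'F_p) = (-1) ^+ N.
Proof.
elim: N => [|N [R [eqR R_Fp]]]; first by exists 1%N; rewrite mul0n expr0.
exists (R * (N * p + p.-1) ^_ p.-1)%N; split.
  have [k pk] : exists k, p = k.+1 by exists p.-1; rewrite prednK // prime_gt0.
  rewrite mulSn addnC fact_addn_ffact eqR pk /= addnS ffactSS factS expnS; ring.
by rewrite natrM R_Fp ffact_Fp ?dvdn_mull // Wilson_Fp exprSr.
Qed.

Lemma fact_p_decomp n : exists e w, [/\ n`! = (p ^ e * w)%N,
  ((p - 1) * e + sp p n)%N = n & (w%:R : 'F_p) = (-1) ^+ e * (dfact p n)%:R].
Proof.
elim/ltn_ind: n => n IHn.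
have [->|n_gt0] := posnP n.
  by exists 0%N, 1%N; rewrite /sp /dfact !big_ord1 /digit div0n mod0n muln0 expr0 mul1r.
have [e [w [eq_w sp_e w_Fp]]] := IHn _ (ltn_Pdiv p_gt1 n_gt0).
have [R [eqR R_Fp]] := fact_mulp (n %/ p).
exists (n %/ p + e)%N, (w * R * n ^_ (n %% p))%N; split.
- by rewrite {1}(divn_eq n p) fact_addn_ffact -(divn_eq n p) eqR eq_w expnD; ring.
- have := mulnDr (p - 1)%N (n %/ p)%N e.
  have : ((p - 1) * (n %/ p) + n %/ p = n %/ p * p)%N.
    by rewrite mulnBl mul1n mulnC subnK // leq_pmulr // prime_gt0.
  move: (divn_eq n p) sp_e; rewrite [sp p n](sp_rec p_gt1).
  set a := (n %/ p)%N; set b := ((p - 1) * a)%N; set c := ((p - 1) * e)%N.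
  set d := ((p - 1) * (a + e))%N; lia.
- have ffact_Fp_n : (n ^_ (n %% p))%:R = ((n %% p)`!)%:R :> 'F_p.
    by rewrite {1}(divn_eq n p) ffact_Fp ?dvdn_mull.
  rewrite (dfact_rec p_gt1) !natrM w_Fp R_Fp ffact_Fp_n.
  by rewrite exprD; ring.
Qed.

Lemma legendre_sp n : ((p - 1) * logn p n`! + sp p n)%N = n.
Proof.
have [e [w [eq_w sp_e w_Fp]]] := fact_p_decomp n.
have cop : coprime p w.
  by rewrite coprime_natr_Fp w_Fp mulf_neq0 ?signr_eq0 ?dfact_Fp_neq0.
by rewrite eq_w [(p ^ e * w)%N]mulnC logn_Gauss // pfactorK.
Qed.

Lemma sp_addn_le x y : (sp p (x + y) <= sp p x + sp p y)%N.
Proof.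
have le_log : (logn p x`! + logn p y`! <= logn p (x + y)`!)%N.
  rewrite -lognM ?fact_gt0 // dvdn_leq_log ?fact_gt0 //.
  by rewrite -(bin_fact (leq_addr y x)) addKn dvdn_mull.
have := leq_mul (leqnn (p - 1)) le_log; rewrite mulnDr.
move: (legendre_sp x) (legendre_sp y) (legendre_sp (x + y)).
set a := ((p - 1) * _)%N; set b := ((p - 1) * _)%N; set c := ((p - 1) * _)%N.
lia.
Qed.

End Legendre.

Section PiIdeal.
Variable p : nat.

Definition pi_poly : {poly rat} := 'X^(p.-1) + (p%:R)%:P.

(* [A] represents an element of pi^k Z_p[pi] when A = pi^k W mod pi_poly with
   W a polynomial over Z_(p). *)
Definition pi_ideal (k : nat) (A : {poly rat}) : Prop :=
  exists2 W, W \is a polyOver (Zlocal p) & pi_poly %| A - 'X^k * W.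

Lemma pi_ideal_Xn k W : W \is a polyOver (Zlocal p) -> pi_ideal k ('X^k * W).
Proof. by exists W; rewrite // subrr dvdp0. Qed.

Lemma pi_ideal0 k : pi_ideal k 0.
Proof. by rewrite -(mulr0 'X^k); apply/pi_ideal_Xn/rpred0. Qed.

Lemma pi_ideal_eq_mod k A B : pi_poly %| A - B -> pi_ideal k B -> pi_ideal k A.
Proof.
move=> dvd_AB [W W_Z dvd_B]; exists W => //.
by rewrite -(subrK B A) -addrA dvdp_add.
Qed.

Lemma pi_idealD k A B : pi_ideal k A -> pi_ideal k B -> pi_ideal k (A + B).
Proof.
move=> [W1 W1_Z dvd1] [W2 W2_Z dvd2]; exists (W1 + W2); first exact: rpredD.
have -> : A + B - 'X^k * (W1 + W2) = (A - 'X^k * W1) + (B - 'X^k * W2) by ring.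
exact: dvdp_add.
Qed.

Lemma pi_idealN k A : pi_ideal k A -> pi_ideal k (- A).
Proof.
move=> [W W_Z dvdW]; exists (- W); first by rewrite rpredN.
by rewrite mulrN -opprD dvdpNr.
Qed.

Lemma pi_ideal_sum k (I : Type) (r : seq I) (P : pred I) (F : I -> {poly rat}) :
  (forall i, P i -> pi_ideal k (F i)) -> pi_ideal k (\sum_(i <- r | P i) F i).
Proof. by move=> idF; apply: big_ind => //; [exact: pi_ideal0 | exact: pi_idealD]. Qed.

Lemma pi_ideal_le k l A : (l <= k)%N -> pi_ideal k A -> pi_ideal l A.
Proof.
move=> le_lk [W W_Z dvdW]; exists ('X^(k - l) * W); first by rewrite rpredM ?polyOverXn.
by rewrite mulrA -exprD subnKC.
Qed.

Lemma pi_idealM k l A B : pi_ideal k A -> pi_ideal l B -> pi_ideal (k + l) (A * B).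
Proof.
move=> [W1 W1_Z dvd1] [W2 W2_Z dvd2]; exists (W1 * W2); first exact: rpredM.
have -> : A * B - 'X^(k + l) * (W1 * W2) =
    (A - 'X^k * W1) * B + ('X^k * W1) * (B - 'X^l * W2) by rewrite exprD; ring.
by apply: dvdp_add; [apply: dvdp_mulr | apply: dvdp_mull].
Qed.

Lemma pi_idealZ k c A : c \in Zlocal p -> pi_ideal k A -> pi_ideal k (c *: A).
Proof.
move=> c_Z [W W_Z dvdW]; exists (c *: W); first exact: polyOverZ.
by rewrite -scalerAr -scalerBr -mul_polyC dvdp_mull.
Qed.

Lemma dvdp_pi_poly_Xpow e : pi_poly %| 'X^(p.-1 * e) - ((- p%:R) ^+ e)%:P.
Proof.
rewrite exprM rmorphXn /= subrXX dvdp_mulr //.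
by rewrite /pi_poly polyCN opprK.
Qed.

(* p c = - pi^(p-1) c modulo pi_poly. *)
Lemma pi_ideal_pZ k c : c \in Zlocal p -> pi_ideal (k + p.-1) ((p%:R * c) *: 'X^k).
Proof.
move=> c_Z; apply: (pi_ideal_eq_mod (B := 'X^(k + p.-1) * (- c)%:P)).
  have -> : (p%:R * c) *: 'X^k - 'X^(k + p.-1) * (- c)%:P = ('X^k * c%:P) * pi_poly.
    by rewrite /pi_poly exprD -mul_polyC polyCM polyCN; ring.
  exact: dvdp_mull.
by apply: pi_ideal_Xn; rewrite polyOverC rpredN.
Qed.

End PiIdeal.

Definition exp_term (a : nat) : {poly rat} := ((a`!)%:R)^-1 *: 'X^a.

Lemma exp_termM a b : exp_term a * exp_term b = ((a`! * b`!)%:R)^-1 *: 'X^(a + b).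
Proof. by rewrite /exp_term -scalerAl -scalerAr scalerA exprD natrM invfM. Qed.

Section DigitTerm.
Variable p : nat.
Hypothesis pP : prime p.

Definition digit_term (a : nat) : {poly rat} := ((dfact p a)%:R)^-1 *: 'X^(sp p a).

Lemma coprime_natr_neq0 n : coprime p n -> n%:R != 0 :> rat.
Proof. by rewrite pnatr_eq0 prime_coprime //; apply: contraNneq => ->; rewrite dvdn0. Qed.

Lemma coprime_dfact a : coprime p (dfact p a).
Proof. by rewrite (coprime_natr_Fp pP) dfact_Fp_neq0. Qed.

Lemma digit_term_ideal a : pi_ideal p (sp p a) (digit_term a).
Proof.
rewrite /digit_term -mul_polyC mulrC; apply: pi_ideal_Xn.
by rewrite polyOverC Zlocal_invn ?coprime_dfact.
Qed.

Lemma digit_term_split m x y : (x < p ^ m)%N ->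
  digit_term (x + p ^ m * y) = digit_term x * digit_term y.
Proof.
move=> lt_x; rewrite /digit_term (sp_split (prime_gt1 pP)) // (dfact_split (prime_gt1 pP)) //.
by rewrite -scalerAl -scalerAr scalerA exprD natrM invfM.
Qed.

Lemma expNp_div_fact_congr a : exists2 c, c \in Zlocal p &
  (- p%:R) ^+ (logn p a`!) / (a`!)%:R = ((dfact p a)%:R)^-1 + p%:R * c.
Proof.
have [e [w [eq_w _ w_Fp]]] := fact_p_decomp pP a; set d := dfact p a in w_Fp *.
have cop_w : coprime p w.
  by rewrite (coprime_natr_Fp pP) w_Fp mulf_neq0 ?signr_eq0 ?dfact_Fp_neq0.
have [t eq_t] : exists t : int, (-1) ^+ e * d%:Z - w%:Z = t * p%:Z.
  apply/dvdzP; rewrite (dvdz_pcharf (pchar_Fp pP)) rmorphB rmorphM /= rmorph_sign.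
  by rewrite -!pmulrn w_Fp subrr.
have {}eq_t : (-1) ^+ e * d%:R - w%:R = t%:~R * p%:R :> rat.
  have := congr1 (intr : int -> rat) eq_t.
  by rewrite rmorphB !rmorphM /= rmorph_sign -!pmulrn.
exists (t%:~R / (w * d)%:R).
  by rewrite rpredM ?rpred_int ?Zlocal_invn // coprimeMr cop_w coprime_dfact.
have p_neq0 : p%:R != 0 :> rat by rewrite pnatr_eq0 -lt0n prime_gt0.
rewrite eq_w [(p ^ e * w)%N]mulnC logn_Gauss // pfactorK // mulrA [p%:R * _]mulrC -eq_t.
rewrite !natrM natrX exprNn; field.
by rewrite (coprime_natr_neq0 cop_w) (coprime_natr_neq0 (coprime_dfact a)) expf_neq0.
Qed.

(* With a = s_p(a) + (p-1) e and pi^(p-1) = -p, pi^a/a! is (-p)^e/a! pi^(s_p(a)). *)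
Lemma exp_term_congr a : pi_ideal p (sp p a + p.-1) (exp_term a - digit_term a).
Proof.
have [c c_Z eq_c] := expNp_div_fact_congr a.
have eq_a : a = (sp p a + p.-1 * logn p a`!)%N.
  by rewrite -{1}(legendre_sp pP a) -subn1 addnC.
apply: (pi_ideal_eq_mod (B := (p%:R * c) *: 'X^(sp p a))); last exact: pi_ideal_pZ.
have -> : exp_term a - digit_term a - (p%:R * c) *: 'X^(sp p a) =
    ((a`!)%:R)^-1 *: 'X^(sp p a) * ('X^(p.-1 * logn p a`!) - ((- p%:R) ^+ logn p a`!)%:P).
  rewrite /exp_term /digit_term mulrBr [_ * ((- p%:R) ^+ _)%:P]mulrC mul_polyC scalerA.
  by rewrite mulrC eq_c [in 'X^a]eq_a exprD -!mul_polyC polyCD; ring.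
exact/dvdp_mull/dvdp_pi_poly_Xpow.
Qed.

End DigitTerm.

Lemma sum_ord_widen0 (R : nmodType) (F : nat -> R) k n : (k <= n)%N ->
  (forall b, (k < b)%N -> F b = 0) -> \sum_(b < k.+1) F b = \sum_(b < n.+1) F b.
Proof.
move=> le_kn F0; rewrite (big_ord_widen n.+1 F) // big_mkcond /=.
by apply: eq_bigr => b _; case: ifPn => //; rewrite -leqNgt => /F0 ->.
Qed.

Lemma coef_X_sub_XS_pow (R : comNzRingType) r k n : (k <= n)%N ->
  (('X - 'X^(r.+1) : {poly R}) ^+ k)`_n =
  \sum_(b < k.+1) ((-1) ^+ b * ((n - k == r * b)%N)%:R) *+ 'C(k, b).
Proof.
move=> le_kn.
have -> : ('X - 'X^(r.+1) : {poly R}) = 'X * (- 'X^r + 1) by rewrite exprS; ring.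
rewrite exprMn exprD1n coefXnM ltnNge le_kn /= coef_sum; apply: eq_bigr => b _.
by rewrite coefMn [in LHS]exprNn -exprM -(rmorph_sign (@polyC R)) coefCM coefXn.
Qed.

Lemma exp_term_binomial k b : (b <= k)%N ->
  ((k`!)%:R^-1 * 'C(k, b)%:R) *: 'X^k = exp_term (k - b) * exp_term b.
Proof.
move=> le_bk; rewrite exp_termM subnK //; congr (_ *: _).
have fact_neq0 j : (j`!)%:R != 0 :> rat by rewrite pnatr_eq0 -lt0n fact_gt0.
rewrite -(bin_fact le_bk) !natrM; field.
by rewrite !fact_neq0 pnatr_eq0 -lt0n bin_gt0 le_bk.
Qed.

(* The contribution of pi^(n-qb)/(n-qb)! X^(n-qb) * (-pi)^b/b! X^(qb) to lambda_n. *)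
Definition lambda_term (q n b : nat) : {poly rat} :=
  if (q * b <= n)%N then (-1) ^+ b *: (exp_term (n - q * b) * exp_term b) else 0.

(* The coefficient of X^n in (pi X (1 - X^r))^k / k! is the sum over b of these. *)
Definition lambda_summand (r n k b : nat) : {poly rat} :=
  ((k`!)%:R^-1)%:P * 'X^k * (((-1) ^+ b * ((n - k == r * b)%N)%:R) *+ 'C(k, b)).

Lemma lambda_double_sum p m n : (0 < p ^ m)%N ->
  lambda p m n = \sum_(k < n.+1) \sum_(b < n.+1) lambda_summand (p ^ m).-1 n k b.
Proof.
move=> q_gt0; rewrite /lambda coef_sum; apply: eq_bigr => [[k /= lt_kn]] _.
have -> : expf p m = 'X%:P * ('X - 'X^((p ^ m).-1.+1)).
  by rewrite /expf prednK // mulrBr.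
rewrite exprMn -rmorphXn /= mulrA -polyCM coefCM coef_X_sub_XS_pow // mulr_sumr.
apply: sum_ord_widen0 => // b lt_kb.
by rewrite /lambda_summand bin_small // mulr0n mulr0.
Qed.

Lemma sum_lambda_summand r n b :
  \sum_(k < n.+1) lambda_summand r n k b = lambda_term r.+1 n b.
Proof.
rewrite /lambda_term; case: ifPn => [le_qbn | /negbTE gt_qbn]; last first.
  rewrite big1 // => k _; rewrite /lambda_summand; case: eqP => [eq_k|].
    by rewrite bin_small ?mulr0n ?mulr0 //; move: gt_qbn (ltn_ord k); lia.
  by rewrite mulr0 mul0rn mulr0.
have lt_k0 : (n - r * b < n.+1)%N by rewrite ltnS leq_subr.
rewrite (bigD1 (Ordinal lt_k0)) //= big1 ?addr0 => [|k /eqP neq_k]; last first.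
  rewrite /lambda_summand; case: eqP => [eq_k|]; last by rewrite mulr0 mul0rn mulr0.
  by case: neq_k; apply: val_inj => /=; move: (ltn_ord k); lia.
rewrite /lambda_summand subKn ?eqxx ?mulr1; last by move: le_qbn; lia.
have le_bk : (b <= n - r * b)%N by move: le_qbn; lia.
have -> : (n - r.+1 * b = n - r * b - b)%N by lia.
rewrite -exp_term_binomial // -!mul_polyC rmorph_sign polyCM polyC_natr.
by rewrite -[_ *+ 'C(_, _)]mulr_natr; ring.
Qed.

Lemma lambda_sum p m n : (0 < p ^ m)%N ->
  lambda p m n = \sum_(b < n.+1) lambda_term (p ^ m) n b.
Proof.
move=> q_gt0; rewrite lambda_double_sum // exchange_big /=.
by apply: eq_bigr => b _; rewrite sum_lambda_summand prednK.
Qed.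

Lemma sum_exp_term_alt N : (0 < N)%N ->
  \sum_(b < N.+1) (-1) ^+ b *: (exp_term (N - b) * exp_term b) = 0.
Proof.
move=> N_gt0; rewrite (eq_bigr (fun b : 'I_N.+1 =>
  ((N`!)%:R^-1 * ((-1) ^+ b *+ 'C(N, b))) *: 'X^N)) => [|b _].
  rewrite -scaler_suml -mulr_sumr -exprD1n addNr expr0n eqn0Ngt N_gt0.
  by rewrite mulr0 scale0r.
rewrite -exp_term_binomial -1?ltnS // scalerA -mulr_natr; congr (_ *: _); ring.
Qed.

Section Congruences.
Variable p : nat.
Hypothesis pP : prime p.

Lemma pi_cong_ideal k A B : pi_cong p k A B <-> pi_ideal p k (A - B).
Proof.
have Zlocal_integral c : (c \in Zlocal p) = p_integral p c.
  by rewrite unfold_in /= prime_coprime.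
split=> [[W [W_int dvdW]] | [W /polyOverP W_Z dvdW]].
  by exists W => //; apply/polyOverP => i; rewrite Zlocal_integral.
by exists W; split=> // i; rewrite -Zlocal_integral.
Qed.

Lemma exp_term_ideal a : pi_ideal p (sp p a) (exp_term a).
Proof.
rewrite -(subrK (digit_term p a) (exp_term a)).
apply: pi_idealD (digit_term_ideal pP a).
exact: pi_ideal_le (leq_addr _ _) (exp_term_congr pP a).
Qed.

Lemma exp_term_split_congr m x y b : (x < p ^ m)%N ->
  pi_ideal p (sp p x + sp p (y + b) + p.-1)
    (exp_term (x + p ^ m * y) * exp_term b - digit_term p x * (exp_term y * exp_term b)).
Proof.
move=> lt_x; set a := (x + p ^ m * y)%N.
have sp_a : sp p a = (sp p x + sp p y)%N by rewrite (sp_split (prime_gt1 pP)).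
have le_sp := sp_addn_le pP y b.
have -> : exp_term a * exp_term b - digit_term p x * (exp_term y * exp_term b) =
    (exp_term a - digit_term p a) * exp_term b +
    digit_term p x * (- (exp_term y - digit_term p y) * exp_term b).
  by rewrite /a (digit_term_split pP) //; ring.
apply: pi_idealD.
  apply: pi_ideal_le (pi_idealM (exp_term_congr pP a) (exp_term_ideal b)); lia.
apply: pi_ideal_le (pi_idealM (digit_term_ideal pP x)
  (pi_idealM (pi_idealN (exp_term_congr pP y)) (exp_term_ideal b))); lia.
Qed.

Lemma lambda_congr_lt m n : (n < p ^ m)%N ->
  pi_ideal p (sp p n + p.-1) (lambda p m n - digit_term p n).
Proof.
move=> lt_nq; rewrite lambda_sum ?expn_gt0 ?prime_gt0 // big_ord_recl big1 => [|b _].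
  rewrite addr0 /lambda_term /= muln0 subn0 expr0 scale1r [exp_term 0]/exp_term.
  by rewrite invr1 scale1r expr0 mulr1; apply: exp_term_congr.
by rewrite /lambda_term ifF // ltn_geF // (leq_trans lt_nq) ?leq_pmulr.
Qed.

Lemma lambda_congr_ge m n : (p ^ m <= n)%N -> pi_ideal p (sp p n + p.-1) (lambda p m n).
Proof.
move=> le_qn; have q_gt0 : (0 < p ^ m)%N by rewrite expn_gt0 prime_gt0.
rewrite lambda_sum //; set q := (p ^ m)%N in q_gt0 le_qn *.
set N := (n %/ q)%N; set x := (n %% q)%N.
have N_gt0 : (0 < N)%N by rewrite divn_gt0.
have n_eq : n = (x + q * N)%N by rewrite /x /N addnC mulnC -divn_eq.
rewrite -(@sum_ord_widen0 _ _ N) ?leq_div // => [|b lt_Nb]; last first.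
  by rewrite /lambda_term ifF // ltn_geF // mulnC -ltn_divLR.
suff : pi_ideal p (sp p n + p.-1) (\sum_(b < N.+1) lambda_term q n b -
    digit_term p x * \sum_(b < N.+1) (-1) ^+ b *: (exp_term (N - b) * exp_term b)).
  by rewrite sum_exp_term_alt // mulr0 subr0.
rewrite mulr_sumr -sumrB; apply: pi_ideal_sum => -[b /= le_bN] _.
rewrite ltnS in le_bN; have le_qb : (q * b <= q * N)%N by rewrite leq_mul2l le_bN orbT.
rewrite /lambda_term n_eq (leq_trans le_qb (leq_addl _ _)).
rewrite -[digit_term p x * _]scalerAr -scalerBr; apply: pi_idealZ; first exact: rpred_sign.
have -> : (x + q * N - q * b = x + q * (N - b))%N by rewrite mulnBr addnBA.
rewrite (sp_split (prime_gt1 pP)) ?ltn_pmod // -[in sp p N](subnK le_bN).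
exact: (@exp_term_split_congr m x (N - b) b (ltn_pmod n q_gt0)).
Qed.

End Congruences.

Theorem lemma1p1 (p m n : nat) : prime p ->
  ((n <= p ^ m - 1)%N ->
     pi_cong p (sp p n + (p - 1)) (lambda p m n)
             (((dfact p n)%:R : rat)^-1 *: 'X^(sp p n))) /\
  ((p ^ m <= n)%N ->
     pi_cong p (sp p n + (p - 1)) (lambda p m n) 0).
Proof.
move=> pP; have q_gt0 : (0 < p ^ m)%N by rewrite expn_gt0 prime_gt0.
rewrite !subn1 !pi_cong_ideal //; split=> [le_nq | le_qn].
  by apply: lambda_congr_lt; rewrite -ltnS prednK in le_nq.
by rewrite subr0; apply: lambda_congr_ge.
Qed.
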